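(* Let $N$ be a simply connected nilpotent Lie group with Lie algebra $\mathfrak n$, $(\delta_t)_{t>0}$ a one-parameter group of dilations given by subspaces $(m_p)_p$, and $M$ a connected closed subgroup of $N$ with Lie algebra $\mathfrak m$. Then the subspace $\mathfrak m_\infty=\lim_{t\to+\infty}\delta_{1/t}(\mathfrak m)$ is a Lie subalgebra of the graded Lie algebra $\mathfrak n_0$.
   Context: Let $C^p(\mathfrak n)$ be the descending central series; choose subspaces $m_p$ with $C^p(\mathfrak n)=m_p\oplus C^{p+1}(\mathfrak n)$, so $\mathfrak n=\bigoplus_p m_p$, and let $\pi_p$ be the projection onto $m_p$. The dilation $\delta_t$ is the linear map acting by $t^p$ on $m_p$. The graded Lie algebra $\mathfrak n_0$ is the vector space $\mathfrak n$ with bracket defined by $[x,y]_0=\pi_{p+q}([x,y])$ for $x\in m_p$, $y\in m_q$ (extended bilinearly). The limit $\mathfrak m_\infty$ is taken in the Grassmannian of $\dim\mathfrak m$-dimensional subspaces of $\mathfrak n$; this limit exists. *)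

From HB Require Import structures.
From mathcomp Require Import all_boot all_order all_algebra.
From mathcomp Require Import all_classical all_reals all_analysis.
Set Implicit Arguments. Unset Strict Implicit. Unset Printing Implicit Defensive.
Import Order.TTheory GRing.Theory Num.Theory.
Local Open Scope ring_scope.
Local Open Scope classical_set_scope.
Import numFieldNormedType.Exports.

Section Nilp.
Variables (R : realType) (d : nat).
Notation V := 'rV[R]_d.

Definition is_lie_bracket (br : V -> V -> V) : Prop :=
  [/\ (forall y, linear (br ^~ y)), (forall x, linear (br x)),
      (forall x, br x x = 0) &
      (forall x y z, br x (br y z) + br y (br z x) + br z (br x y) = 0)].

Definition brsp (br : V -> V -> V) (A : 'M[R]_d) : 'M[R]_d :=
  (\sum_(i < d) \sum_(j < d) <<br (delta_mx 0 i) (row j A)>>)%MS.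

(* lcs_aux k = C^{k+1}(n) *)
Fixpoint lcs_aux (br : V -> V -> V) (k : nat) : 'M[R]_d :=
  if k is k'.+1 then brsp br (lcs_aux br k') else 1%:M.

Definition lcs br (p : nat) : 'M[R]_d := lcs_aux br p.-1.

Definition nilpotent_bracket br : Prop := exists s, lcs br s.+1 = 0.

Definition is_grading br (mg : nat -> 'M[R]_d) : Prop :=
  forall p, (0 < p)%N ->
    (lcs br p == mg p + lcs br p.+1)%MS /\ (mg p :&: lcs br p.+1)%MS = 0.

(* projection pi_p onto m_p along the other m_q (n = (+)_{1<=p<=d} m_p,
   since C^{d+1}(n) = 0 for a nilpotent Lie algebra of dimension d);
   pi_p = 0 for p outside [1, d] (where m_p = 0). *)
Definition proj_grad (mg : nat -> 'M[R]_d) (p : nat) : 'M[R]_d :=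
  if (0 < p <= d)%N then
    proj_mx (<<mg p>>)%MS (\sum_(1 <= q < d.+1 | q != p) <<mg q>>)%MS
  else 0.

Definition dilation (mg : nat -> 'M[R]_d) (t : R) : 'M[R]_d :=
  \sum_(1 <= p < d.+1) t ^+ p *: proj_grad mg p.

Definition graded_bracket br (mg : nat -> 'M[R]_d) (x y : V) : V :=
  \sum_(1 <= p < d.+1) \sum_(1 <= q < d.+1)
     br (x *m proj_grad mg p) (y *m proj_grad mg q) *m proj_grad mg (p + q).

Definition is_subalgebra (br : V -> V -> V) (A : 'M[R]_d) : Prop :=
  forall x y : V, (x <= A)%MS -> (y <= A)%MS -> (br x y <= A)%MS.

(* Convergence in the Grassmannian Gr(k, R^d) as t -> +oo: the subspaces
   (row spaces) W t converge to Winf, i.e. (locally) they admit bases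
   B t (k x d matrices) converging entrywise to a basis Binf of Winf. *)
Definition grass_lim (k : nat) (W : R -> 'M[R]_d) (Winf : 'M[R]_d) : Prop :=
  exists (B : R -> 'M[R]_(k, d)) (Binf : 'M[R]_(k, d)),
    [/\ \rank Binf = k, (Binf == Winf)%MS,
        (\forall t \near +oo, (B t == W t)%MS) &
        (forall i j, B t i j @[t --> +oo] --> Binf i j)].

End Nilp.

(* For x, y in m_oo pick x_t, y_t in delta_{1/t}(m) converging to them.  As m is
   a subalgebra, delta_{1/t}[delta_t x_t, delta_t y_t] stays in delta_{1/t}(m).
   Its component pi_r [pi_p x_t, pi_q y_t] along the grading carries the factor
   t^(p+q-r), and it vanishes for r < p + q because [m_p, m_q] lies in
   C^(p+q) = m_(p+q) (+) m_(p+q+1) (+) ...  So the expression converges to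
   [x, y]_0, and a limit of vectors of converging subspaces lies in the limit. *)

From HB Require Import structures.
From mathcomp Require Import all_boot all_order all_algebra.
From mathcomp Require Import all_classical all_reals all_analysis.
Import Order.TTheory GRing.Theory Num.Theory.
Import numFieldNormedType.Exports.
Local Open Scope ring_scope.
Local Open Scope classical_set_scope.

Set Implicit Arguments.

Section EntrywiseConvergence.
Variables (R : numFieldType) (T : Type) (F : set_system T).
Context {PF : ProperFilter F}.

Definition mx_cvg {m n} (f : T -> 'M[R]_(m, n)) (L : 'M[R]_(m, n)) : Prop :=
  forall i j, f x i j @[x --> F] --> L i j.

Lemma mx_cvg_cst {m n} (A : 'M[R]_(m, n)) : mx_cvg (fun=> A) A.
Proof. by move=> i j; exact: cvg_cst. Qed.

Lemma mx_cvg_near_eq {m n} {f g : T -> 'M[R]_(m, n)} L :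
  (\forall x \near F, f x = g x) -> mx_cvg g L -> mx_cvg f L.
Proof.
move=> fg gL i j; apply: cvg_trans (gL i j); apply: near_eq_cvg.
by apply: filterS fg => x /= ->.
Qed.

Lemma mx_cvgZ {m n} {c : T -> R} {a : R} (f : T -> 'M[R]_(m, n)) A :
  c x @[x --> F] --> a -> mx_cvg f A -> mx_cvg (fun x => c x *: f x) (a *: A).
Proof.
move=> ca fA i j; rewrite mxE; under eq_cvg do rewrite mxE.
exact: cvgM ca (fA i j).
Qed.

Lemma mx_cvg_sum {m n} (I : eqType) (r : seq I) (P : pred I)
    (f : I -> T -> 'M[R]_(m, n)) (L : I -> 'M[R]_(m, n)) :
  (forall i, i \in r -> P i -> mx_cvg (f i) (L i)) ->
  mx_cvg (fun x => \sum_(i <- r | P i) f i x) (\sum_(i <- r | P i) L i).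
Proof.
move=> fL a b; rewrite summxE big_seq_cond.
under eq_cvg do rewrite summxE big_seq_cond.
apply: cvg_big => [|i /andP[ir Pi]]; [exact: add_continuous | exact: fL].
Qed.

Lemma mx_cvg_mul {m n p} (f : T -> 'M[R]_(m, n)) (g : T -> 'M[R]_(n, p)) A B :
  mx_cvg f A -> mx_cvg g B -> mx_cvg (fun x => f x *m g x) (A *m B).
Proof.
move=> fA gB i k; rewrite mxE; under eq_cvg do rewrite mxE.
by apply: cvg_big => [|j _]; [exact: add_continuous | exact: cvgM].
Qed.

Lemma mx_cvg_unique {m n} (f : T -> 'M[R]_(m, n)) A B :
  mx_cvg f A -> mx_cvg f B -> A = B.
Proof. by move=> fA fB; apply/matrixP => i j; exact: cvg_unique (fA i j) (fB i j). Qed.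

Lemma cvg_det {n} (f : T -> 'M[R]_n) A : mx_cvg f A -> \det (f x) @[x --> F] --> \det A.
Proof.
move=> fA; apply: cvg_big => [|s _]; first exact: add_continuous.
apply: cvgM; first exact: cvg_cst.
by apply: cvg_big => [|i _]; [exact: mul_continuous | exact: fA].
Qed.

Lemma mx_cvg_adj {n} (f : T -> 'M[R]_n) A :
  mx_cvg f A -> mx_cvg (fun x => \adj (f x)) (\adj A).
Proof.
move=> fA i j; rewrite mxE; under eq_cvg do rewrite mxE.
apply: cvgM; first exact: cvg_cst.
by apply: cvg_det => a b; rewrite !mxE; under eq_cvg do rewrite !mxE; exact: fA.
Qed.

(* With [P] a right inverse of [Binf], [B x *m P] tends to 1, and Cramer's rule
   writes [z x] in the basis [B x] with coefficients continuous in the data. *)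
Lemma mx_cvg_submx {k d} (B : T -> 'M[R]_(k, d)) Binf (z : T -> 'rV[R]_d) zinf :
  row_free Binf -> mx_cvg B Binf -> mx_cvg z zinf ->
  (\forall x \near F, (z x <= B x)%MS) -> (zinf <= Binf)%MS.
Proof.
move=> /row_freeP[P BP1] BB zz zB.
pose D x := B x *m P.
have DD : mx_cvg D 1%:M by rewrite -BP1; exact: mx_cvg_mul BB (mx_cvg_cst P).
have cramer : \forall x \near F, \det (D x) *: z x = z x *m P *m \adj (D x) *m B x.
  apply: filterS zB => x /submxP[c ->].
  rewrite /D -!mulmxA (mulmxA (B x)) (mulmxA (B x *m P)) mul_mx_adj.
  by rewrite mul_scalar_mx -scalemxAr.
have lhs : mx_cvg (fun x => \det (D x) *: z x) zinf.
  by rewrite -[zinf]scale1r -(det1 R k); exact: mx_cvgZ (cvg_det DD) zz.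
have rhs : mx_cvg (fun x => z x *m P *m \adj (D x) *m B x) (zinf *m P *m \adj 1%:M *m Binf).
  apply: mx_cvg_mul BB; apply: mx_cvg_mul (mx_cvg_adj DD).
  exact: mx_cvg_mul zz (mx_cvg_cst P).
rewrite (mx_cvg_unique lhs (mx_cvg_near_eq cramer rhs)) adj1 mulmx1.
exact: submxMl.
Qed.

End EntrywiseConvergence.

Arguments mx_cvg {R T} F {m n} f L.

Section LieBracket.
Variables (R : realType) (d : nat) (br : 'rV[R]_d -> 'rV[R]_d -> 'rV[R]_d).
Hypothesis br_lie : is_lie_bracket br.
Local Notation V := 'rV[R]_d.

Definition ad (x : V) : {linear V -> V} :=
  HB.pack (br x) (GRing.isLinear.Build _ _ _ _ (br x) (let: And4 _ h _ _ := br_lie in h x)).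
Definition rad (y : V) : {linear V -> V} :=
  HB.pack (br^~ y) (GRing.isLinear.Build _ _ _ _ (br^~ y) (let: And4 h _ _ _ := br_lie in h y)).

Lemma brDl y u v : br (u + v) y = br u y + br v y.
Proof. exact: (linearD (rad y)). Qed.
Lemma brDr x u v : br x (u + v) = br x u + br x v.
Proof. exact: (linearD (ad x)). Qed.
Lemma brZl y a u : br (a *: u) y = a *: br u y.
Proof. exact: (linearZZ (rad y)). Qed.
Lemma brZr x a u : br x (a *: u) = a *: br x u.
Proof. exact: (linearZZ (ad x)). Qed.
Lemma br_suml y I r (P : pred I) (F : I -> V) :
  br (\sum_(i <- r | P i) F i) y = \sum_(i <- r | P i) br (F i) y.
Proof. exact: (linear_sum (rad y)). Qed.
Lemma br_sumr x I r (P : pred I) (F : I -> V) :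
  br x (\sum_(i <- r | P i) F i) = \sum_(i <- r | P i) br x (F i).
Proof. exact: (linear_sum (ad x)). Qed.

Lemma brC x y : br x y = - br y x.
Proof.
have [_ _ br_alt _] := br_lie.
apply/eqP; rewrite -addr_eq0; apply/eqP.
by have := br_alt (x + y); rewrite brDl !brDr !br_alt add0r addr0.
Qed.

Lemma br_jacobi x y z : br (br x y) z = br x (br y z) + br y (br z x).
Proof.
have [_ _ _ jacobi] := br_lie.
by apply/eqP; rewrite (brC (br x y)) eq_sym -subr_eq0 opprK jacobi.
Qed.

Lemma br_expand u v :
  br u v = \sum_(i < d) \sum_(k < d) (u 0 i * v 0 k) *: br (delta_mx 0 i) (delta_mx 0 k).
Proof.
rewrite {1}(row_sum_delta u) br_suml; apply: eq_bigr => i _.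
rewrite brZl {1}(row_sum_delta v) br_sumr scaler_sumr; apply: eq_bigr => k _.
by rewrite brZr scalerA.
Qed.

Lemma mx_cvg_br (T : Type) (F : set_system T) {PF : ProperFilter F}
    (xt yt : T -> V) x y :
  mx_cvg F xt x -> mx_cvg F yt y -> mx_cvg F (fun t => br (xt t) (yt t)) (br x y).
Proof.
move=> xx yy; under [X in mx_cvg _ X]funext do rewrite br_expand.
rewrite br_expand; apply: mx_cvg_sum => i _ _; apply: mx_cvg_sum => k _ _.
by apply: mx_cvgZ (mx_cvg_cst _); exact: cvgM (xx 0 i) (yy 0 k).
Qed.

Lemma br_sub_brsp A x a : (a <= A)%MS -> (br x a <= brsp br A)%MS.
Proof.
case/submxP=> w ->; rewrite mulmx_sum_row (row_sum_delta x) br_suml.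
apply: summx_sub => i _; rewrite brZl br_sumr scalemx_sub // summx_sub // => j _.
by rewrite brZr scalemx_sub // (sumsmx_sup i) // (sumsmx_sup j) // genmxE.
Qed.

Lemma brspS A B : (A <= B)%MS -> (brsp br A <= brsp br B)%MS.
Proof.
move=> sAB; apply/sumsmx_subP => i _; apply/sumsmx_subP => j _.
by rewrite genmxE br_sub_brsp // (submx_trans (row_sub j A)).
Qed.

Lemma brl_brsp_sub A b m (C : 'M[R]_(m, d)) a :
  (forall i j, br (br (delta_mx 0 i) (row j A)) b <= C)%MS ->
  (a <= brsp br A)%MS -> (br a b <= C)%MS.
Proof.
move=> sC sa; rewrite -[br a b](mul_rV_lin1 (rad b)).
apply: submx_trans (submxMr _ sa) _; rewrite /brsp sumsmxMr_gen.
apply/sumsmx_subP => i _; rewrite genmxE sumsmxMr_gen.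
apply/sumsmx_subP => j _; rewrite genmxE (eqmxMr _ (genmxE _)).
by rewrite mul_rV_lin1; exact: sC.
Qed.

Lemma lcs_auxS_sub k : (lcs_aux br k.+1 <= lcs_aux br k)%MS.
Proof. by elim: k => [|k IHk]; [exact: submx1 | exact: brspS]. Qed.

Lemma lcs_aux_antitone k n : (k <= n)%N -> (lcs_aux br n <= lcs_aux br k)%MS.
Proof.
move=> /subnKC <-; elim: (n - k)%N => [|j IHj]; first by rewrite addn0.
by rewrite addnS (submx_trans (lcs_auxS_sub _)).
Qed.

Lemma lcs_aux_stationary k n :
  (lcs_aux br k <= lcs_aux br k.+1)%MS -> (lcs_aux br k <= lcs_aux br (k + n))%MS.
Proof.
move=> sk; suff step j : (lcs_aux br (k + j) <= lcs_aux br (k + j).+1)%MS.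
  by elim: n => [|n IHn]; rewrite ?addn0 // addnS (submx_trans IHn).
by elim: j => [|j IHj]; rewrite ?addn0 // addnS; exact: brspS.
Qed.

Lemma br_lcs_aux i j a b : (a <= lcs_aux br i)%MS -> (b <= lcs_aux br j)%MS ->
  (br a b <= lcs_aux br (i + j).+1)%MS.
Proof.
elim: i j a b => [|i IHi] j a b sa sb; first exact: br_sub_brsp.
apply: brl_brsp_sub sa => k l; rewrite br_jacobi addmx_sub //.
  by rewrite addSn br_sub_brsp // IHi // row_sub.
by rewrite addSn -addnS IHi ?row_sub // brC eqmx_opp br_sub_brsp.
Qed.

Lemma br_lcs p q a b : (0 < p)%N -> (0 < q)%N ->
  (a <= lcs br p)%MS -> (b <= lcs br q)%MS -> (br a b <= lcs br (p + q))%MS.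
Proof.
case: p => // p; case: q => // q _ _ sa sb.
by rewrite /lcs addSn /= addnS; exact: br_lcs_aux.
Qed.

Hypothesis br_nil : nilpotent_bracket br.

Lemma lcs_aux_rank k : lcs_aux br k != 0 -> (\rank (lcs_aux br k) + k <= d)%N.
Proof.
elim: k => [|k IHk] nz; first by rewrite addn0 mxrank1.
have nzk : lcs_aux br k != 0.
  by apply: contraNneq nz => Ck0; rewrite -submx0 -Ck0 lcs_auxS_sub.
rewrite addnS; apply: leq_trans (IHk nzk); rewrite ltn_add2r.
rewrite (ltn_leqif (mxrank_leqif_sup (lcs_auxS_sub k))).
apply: contra nzk => /lcs_aux_stationary stable; have [s Cs0] := br_nil.
by rewrite -submx0 -Cs0 (submx_trans (stable s)) // lcs_aux_antitone // leq_addl.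
Qed.

Lemma lcs_d1 : lcs br d.+1 = 0.
Proof.
rewrite /lcs /=; apply/eqP/contraT => nz; have := lcs_aux_rank _ nz.
by rewrite -[X in (_ <= X)%N]add0n leq_add2r leqn0 mxrank_eq0 (negPf nz).
Qed.

End LieBracket.

Lemma cvg_dilation_coef {R : realType} {p q r : nat} : (p + q <= r)%N ->
  (t ^+ p * t ^+ q * t^-1 ^+ r) @[t --> +oo] --> ((r == p + q)%:R : R).
Proof.
move=> pqr; move: (r - (p + q))%N (subnKC pqr) => k <- {pqr}.
have -> : ((p + q + k == p + q)%:R : R) = 0 ^+ k.
  by rewrite expr0n -[X in _ == X]addn0 eqn_add2l.
have inv_cvg0 : (fun t : R => t^-1) @ +oo --> 0.
  by apply/gtr0_cvgV0; [exact: nbhs_pinfty_gt | exact: cvg_id].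
apply: cvg_trans (continuous_cvg _ (@exprn_continuous R k 0) inv_cvg0).
apply: near_eq_cvg; near=> t.
have t_neq0 : t != 0 by rewrite gt_eqF //; near: t; exact: nbhs_pinfty_gt.
by rewrite /= -exprD [t^-1 ^+ _]exprD mulrA -exprMn mulfV // expr1n mul1r.
Unshelve. all: by end_near.
Qed.

Section Grading.
Variables (R : realType) (d : nat) (br : 'rV[R]_d -> 'rV[R]_d -> 'rV[R]_d).
Variable mg : nat -> 'M[R]_d.
Hypotheses (br_lie : is_lie_bracket br) (br_nil : nilpotent_bracket br).
Hypothesis mg_grading : is_grading br mg.
Local Notation pi := (proj_grad mg).

Lemma mg_sub_lcs p : (0 < p)%N -> (mg p <= lcs br p)%MS.
Proof.
by move=> p_gt0; have [/andP[_ sCp] _] := mg_grading _ p_gt0; exact: submx_trans (addsmxSl _ _) sCp.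
Qed.

Lemma lcs_grading p : (0 < p)%N -> (p <= d.+1)%N ->
  (lcs br p <= \sum_(p <= s < d.+1) mg s)%MS /\
  \rank (lcs br p) = (\sum_(p <= s < d.+1) \rank (mg s))%N.
Proof.
move=> + /subnKC; move: (d.+1 - p)%N => k; elim: k p => [|k IHk] p p_gt0 Dd.
  by rewrite addn0 in Dd; rewrite Dd lcs_d1 // big_geq // sub0mx mxrank0.
have [Cp dxp] := mg_grading _ p_gt0.
have [|sub rk] := IHk p.+1 isT; first by rewrite addSnnS.
have lt_pd : (p < d.+1)%N by rewrite -Dd -addSnnS leq_addr.
rewrite (big_ltn lt_pd) (big_ltn lt_pd); split.
  by case/andP: Cp => sCp _; exact: submx_trans sCp (addsmxS (submx_refl _) sub).
by rewrite (eqmxP Cp) mxrank_disjoint_sum // rk.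
Qed.

Lemma lcs_sub_sum p : (0 < p)%N -> (lcs br p <= \sum_(p <= s < d.+1) mg s)%MS.
Proof.
move=> p_gt0; have [p_le | p_gt] := leqP p d.+1.
  by case: (lcs_grading _ p_gt0 p_le).
suff -> : lcs br p = 0 by exact: sub0mx.
apply/eqP; rewrite -submx0 -(lcs_d1 br_lie br_nil) /lcs lcs_aux_antitone //.
by case: p p_gt0 p_gt => // p _; rewrite ltnS => /ltnW.
Qed.

Lemma sum_grading_full : (1%:M <= \sum_(i < d.+1 | (0 < i)%N) <<mg i>>)%MS.
Proof.
apply: submx_trans (lcs_sub_sum _ (ltn0Sn 0)) _; rewrite big_geq_mkord.
by apply/sumsmx_subP => i i_gt0; rewrite (sumsmx_sup i) ?genmxE.
Qed.

Lemma mxdirect_grading : mxdirect (\sum_(i < d.+1 | (0 < i)%N) <<mg i>>)%MS.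
Proof.
rewrite mxdirectEgeq /=; have [_ rk] := lcs_grading _ (ltn0Sn 0) (ltn0Sn d).
have -> : (\sum_(i < d.+1 | (0 < i)%N) \rank <<mg i>>)%N = d.
  rewrite -[d in RHS](mxrank1 R d) [\rank _]rk big_geq_mkord.
  by apply: eq_bigr => i _; rewrite genmxE.
by rewrite -{1}(mxrank1 R d) mxrankS // sum_grading_full.
Qed.

Lemma grading_disjoint p : (0 < p <= d)%N ->
  (<<mg p>> :&: \sum_(1 <= q < d.+1 | q != p) <<mg q>>)%MS = 0.
Proof.
case/andP=> p_gt0 p_le; have /mxdirect_sumsP dx := mxdirect_grading.
have := dx (Ordinal (p_le : (p < d.+1)%N)) p_gt0; rewrite big_geq_mkord /=.
by under [X in (_ :&: X)%MS]eq_bigl do rewrite andbC -val_eqE.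
Qed.

Lemma proj_grad_sub p : (pi p <= mg p)%MS.
Proof.
rewrite /proj_grad; case: ifP => _; last exact: sub0mx.
rewrite -[X in (X <= _)%MS]mul1mx; apply: submx_trans (proj_mx_sub _ _ _) _.
by rewrite genmxE.
Qed.

Lemma proj_grad_id m (W : 'M[R]_(m, d)) p :
  (0 < p <= d)%N -> (W <= mg p)%MS -> W *m pi p = W.
Proof. by move=> p_in sW; rewrite /proj_grad p_in proj_mx_id ?grading_disjoint ?genmxE. Qed.

Lemma proj_grad_eq0 m (W : 'M[R]_(m, d)) p :
  (W <= \sum_(1 <= q < d.+1 | q != p) <<mg q>>)%MS -> W *m pi p = 0.
Proof.
rewrite /proj_grad; case: ifP => p_in sW; last by rewrite mulmx0.
by rewrite proj_mx_0 ?grading_disjoint.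
Qed.

Lemma proj_grad_other m (W : 'M[R]_(m, d)) p q :
  (0 < q <= d)%N -> q != p -> (W <= mg q)%MS -> W *m pi p = 0.
Proof.
case/andP=> q_gt0 q_le qp sW; apply: proj_grad_eq0; rewrite big_geq_mkord.
by rewrite (sumsmx_sup (Ordinal (q_le : (q < d.+1)%N))) ?genmxE //= qp.
Qed.

Lemma proj_grad_lt m (W : 'M[R]_(m, d)) p r :
  (r < p)%N -> (W <= \sum_(p <= s < d.+1) mg s)%MS -> W *m pi r = 0.
Proof.
move=> rp sW; apply: proj_grad_eq0; apply: submx_trans sW _; rewrite !big_geq_mkord.
apply/sumsmx_subP => s /= ps; rewrite (sumsmx_sup s) ?genmxE //=.
by rewrite (leq_trans _ ps) ?(leq_trans _ rp) // andbT neq_ltn (leq_trans rp ps) orbT.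
Qed.

Lemma proj_gradM p q : pi p *m pi q = if p == q then pi p else 0.
Proof.
have [p_in | p_out] := boolP (0 < p <= d)%N; last first.
  by rewrite /proj_grad (negPf p_out) mul0mx if_same.
case: eqP => [<- | /eqP pq]; first by rewrite proj_grad_id ?proj_grad_sub.
by apply: proj_grad_other (proj_grad_sub p); rewrite // eq_sym.
Qed.

Lemma sum_proj_grad : \sum_(1 <= p < d.+1) pi p = 1%:M.
Proof.
have /sub_sums_genmxP[u Du] := sum_grading_full.
rewrite -[LHS]mul1mx {1}Du [RHS]Du mulmx_suml; apply: eq_bigr => i i_gt0.
have i_in : (0 < i <= d)%N by rewrite i_gt0 -ltnS ltn_ord.
rewrite big_geq_mkord mulmx_sumr (bigD1 i) //= big1 ?addr0 => [|p /andP[_ pNi]].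
  by rewrite proj_grad_id ?submxMl.
by apply: proj_grad_other (submxMl _ _); rewrite // eq_sym.
Qed.

Lemma dilationM t s : dilation mg t *m dilation mg s = dilation mg (t * s).
Proof.
rewrite /dilation mulmx_suml; apply: eq_big_seq => p p_in.
rewrite -scalemxAl mulmx_sumr (bigD1_seq p) ?iota_uniq //= big1_seq => [|q /andP[qp _]].
  by rewrite addr0 -scalemxAr proj_gradM eqxx scalerA exprMn.
by rewrite -scalemxAr proj_gradM eq_sym (negPf qp) scaler0.
Qed.

Lemma dilation1 : dilation mg 1 = 1%:M.
Proof. by rewrite -sum_proj_grad; apply: eq_bigr => p _; rewrite expr1n scale1r. Qed.

Lemma br_proj_grad_lt x y p q r : (0 < p)%N -> (0 < q)%N -> (r < p + q)%N ->
  br (x *m pi p) (y *m pi q) *m pi r = 0.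
Proof.
move=> p_gt0 q_gt0 rpq; apply: proj_grad_lt rpq _.
have pq_gt0 : (0 < p + q)%N by rewrite addn_gt0 p_gt0.
have proj_sub_lcs s z : (0 < s)%N -> (z *m pi s <= lcs br s)%MS.
  by move=> s_gt0; rewrite mulmx_sub // (submx_trans (proj_grad_sub s)) ?mg_sub_lcs.
apply: submx_trans (lcs_sub_sum _ pq_gt0).
by apply: br_lcs; rewrite ?proj_sub_lcs.
Qed.

Lemma dilated_br_expand u v t :
  br (u *m dilation mg t) (v *m dilation mg t) *m dilation mg t^-1 =
  \sum_(1 <= p < d.+1) \sum_(1 <= q < d.+1) \sum_(1 <= r < d.+1)
     (t ^+ p * t ^+ q * t^-1 ^+ r) *: (br (u *m pi p) (v *m pi q) *m pi r).
Proof.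
have dil (w : 'rV[R]_d) s : w *m dilation mg s = \sum_(1 <= p < d.+1) s ^+ p *: (w *m pi p).
  by rewrite /dilation mulmx_sumr; apply: eq_bigr => p _; rewrite scalemxAr.
rewrite (dil u) (br_suml br_lie) mulmx_suml; apply: eq_bigr => p _.
rewrite (brZl br_lie) -scalemxAl (dil v) (br_sumr br_lie) mulmx_suml scaler_sumr.
apply: eq_bigr => q _; rewrite (brZr br_lie) -scalemxAl dil !scaler_sumr.
by apply: eq_bigr => r _; rewrite !scalerA.
Qed.

Lemma graded_bracket_expand x y :
  graded_bracket br mg x y =
  \sum_(1 <= p < d.+1) \sum_(1 <= q < d.+1) \sum_(1 <= r < d.+1)
     (r == p + q)%:R *: (br (x *m pi p) (y *m pi q) *m pi r).
Proof.
apply: eq_bigr => p _; apply: eq_bigr => q _.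
have [pq_in | pq_out] := boolP ((p + q)%N \in index_iota 1 d.+1).
  rewrite (bigD1_seq (p + q)%N) ?iota_uniq //= eqxx scale1r big1_seq ?addr0 //.
  by move=> r /andP[/negPf -> _]; rewrite scale0r.
have pi_pq0 : pi (p + q) = 0.
  by rewrite /proj_grad ifN // -[(p + q <= d)%N]ltnS -mem_index_iota.
rewrite pi_pq0 mulmx0 big1_seq // => r /andP[_ r_in].
have /negPf-> : r != (p + q)%N by apply: contraNneq pq_out => <-.
by rewrite scale0r.
Qed.

Lemma cvg_dilated_br (xt yt : R -> 'rV[R]_d) x y :
  mx_cvg +oo xt x -> mx_cvg +oo yt y ->
  mx_cvg +oo (fun t => br (xt t *m dilation mg t) (yt t *m dilation mg t) *m dilation mg t^-1)
    (graded_bracket br mg x y).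
Proof.
move=> xx yy; under [X in mx_cvg _ X]funext do rewrite dilated_br_expand.
rewrite graded_bracket_expand.
apply: mx_cvg_sum => p; rewrite mem_index_iota => /andP[p_gt0 _] _.
apply: mx_cvg_sum => q; rewrite mem_index_iota => /andP[q_gt0 _] _.
apply: mx_cvg_sum => r _ _; have [r_lt | r_ge] := ltnP r (p + q).
  rewrite br_proj_grad_lt // scaler0.
  under [X in mx_cvg _ X]funext do rewrite br_proj_grad_lt // scaler0.
  exact: mx_cvg_cst.
apply: mx_cvgZ (cvg_dilation_coef r_ge) _; apply: mx_cvg_mul _ (mx_cvg_cst _).
by apply: (mx_cvg_br br_lie); apply: mx_cvg_mul _ (mx_cvg_cst _).
Qed.

Lemma dilation_inv_sub {m} {t : R} (W : 'M[R]_(m, d)) (A : 'M[R]_d) : t != 0 ->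
  (W <= A *m dilation mg t^-1)%MS -> (W *m dilation mg t <= A)%MS.
Proof.
move=> t_neq0 /(submxMr (dilation mg t)); rewrite -mulmxA dilationM mulVf //.
by rewrite dilation1 mulmx1.
Qed.

End Grading.

Theorem lemma2p16 (R : realType) (d : nat) (br : 'rV[R]_d -> 'rV[R]_d -> 'rV[R]_d)
  (mg : nat -> 'M[R]_d) (m minf : 'M[R]_d) :
  is_lie_bracket br -> nilpotent_bracket br -> is_grading br mg ->
  is_subalgebra br m ->
  grass_lim (\rank m) (fun t => (m *m dilation mg t^-1)%R) minf ->
  is_subalgebra (graded_bracket br mg) minf.
Proof.
move=> br_lie br_nil mg_grading m_sub [B [Binf [rkB /andP[sBinf sminfB] BW BB]]] x y xm ym.
have [a ->] := submxP (submx_trans xm sminfB).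
have [b ->] := submxP (submx_trans ym sminfB).
have Bfree : row_free Binf by rewrite /row_free rkB.
apply: submx_trans sBinf; apply: (mx_cvg_submx Bfree BB).
  by apply: cvg_dilated_br => //; apply: mx_cvg_mul (mx_cvg_cst _) BB.
near=> t; have t_neq0 : t != 0 by rewrite gt_eqF //; near: t; exact: nbhs_pinfty_gt.
have /andP[sBW sWB] : (B t == m *m dilation mg t^-1)%MS by near: t.
have dil_in_m (c : 'rV[R]_(\rank m)) : (c *m B t *m dilation mg t <= m)%MS.
  by apply: (dilation_inv_sub br_lie br_nil mg_grading t_neq0); apply: mulmx_sub.
apply: submx_trans sWB; apply: submxMr.
by apply: m_sub; exact: dil_in_m.
Unshelve. all: by end_near.
Qed.
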